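(* Assume (F), fix $\alpha\in\,]0,1[$, and let $0\le u^-<u^+\le V$ with $\hat\rho_{u^+}\le\check\rho_{u^-}$. Then $$u^+-u^-\ \ge\ \frac{\beta}{2}\,\big(\hat\rho_{u^-}-\check\rho_{u^-}\big).$$
   Context: Hypothesis (F): $R>0$; $f\in C^2([0,R];[0,+\infty))$ with $f(\rho)=\rho v(\rho)$, $v\in C^2([0,R];[0,+\infty))$; $f(0)=f(R)=0$; there are $B\ge\beta>0$ with $-B\le f''\le-\beta$ on $[0,R]$; $v'(\rho)<0$ for $\rho\in\,]0,R[$. Let $V:=\max_{[0,R]}v=v(0)$. Define $f_\alpha(\rho):=\alpha f(\rho/\alpha)$ for $\rho\in[0,\alpha R]$. For $u\in[0,V]$: $\tilde\rho_u$ is the unique solution of $f_\alpha'(\rho)=u$; $\varphi_u(\rho):=f_\alpha(\tilde\rho_u)+u(\rho-\tilde\rho_u)$ for $\rho\in[0,R]$; $\mathcal I_u:=\{\rho\in[0,R]: f(\rho)=\varphi_u(\rho)\}$, $\check\rho_u:=\min\mathcal I_u$, $\hat\rho_u:=\max\mathcal I_u$. *)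

From Stdlib Require Import Reals Lra.
Open Scope R_scope.

Definition deriv_within (a b : R) (g : R -> R) (x l : R) : Prop :=
  forall eps, 0 < eps -> exists delta, 0 < delta /\
    forall h, h <> 0 -> Rabs h < delta -> a <= x + h <= b ->
      Rabs ((g (x + h) - g x) / h - l) < eps.

Definition cont_within (a b : R) (g : R -> R) (x : R) : Prop :=
  forall eps, 0 < eps -> exists delta, 0 < delta /\
    forall y, a <= y <= b -> Rabs (y - x) < delta -> Rabs (g y - g x) < eps.

Definition C2_on (a b : R) (g g1 g2 : R -> R) : Prop :=
  forall x, a <= x <= b ->
    deriv_within a b g x (g1 x) /\ deriv_within a b g1 x (g2 x) /\
    cont_within a b g2 x.

Definition hypF (Rr : R) (f f1 f2 v v1 v2 : R -> R) (B beta : R) : Prop :=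
  0 < Rr /\
  C2_on 0 Rr f f1 f2 /\ C2_on 0 Rr v v1 v2 /\
  (forall x, 0 <= x <= Rr -> 0 <= f x /\ 0 <= v x /\ f x = x * v x) /\
  f 0 = 0 /\ f Rr = 0 /\
  0 < beta /\ beta <= B /\
  (forall x, 0 <= x <= Rr -> - B <= f2 x <= - beta) /\
  (forall x, 0 < x < Rr -> v1 x < 0).

Definition f_alpha (alpha : R) (f : R -> R) (rho : R) : R := alpha * f (rho / alpha).

Definition is_tilde_rho (Rr alpha : R) (f : R -> R) (u rt : R) : Prop :=
  0 <= rt <= alpha * Rr /\ deriv_within 0 (alpha * Rr) (f_alpha alpha f) rt u.

Definition phi_u (alpha : R) (f : R -> R) (u rt rho : R) : R :=
  f_alpha alpha f rt + u * (rho - rt).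

Definition in_I (Rr alpha : R) (f : R -> R) (u rt rho : R) : Prop :=
  0 <= rho <= Rr /\ f rho = phi_u alpha f u rt rho.

Definition is_check_rho (Rr alpha : R) (f : R -> R) (u rt x : R) : Prop :=
  in_I Rr alpha f u rt x /\ (forall y, in_I Rr alpha f u rt y -> x <= y).

Definition is_hat_rho (Rr alpha : R) (f : R -> R) (u rt x : R) : Prop :=
  in_I Rr alpha f u rt x /\ (forall y, in_I Rr alpha f u rt y -> y <= x).

From Stdlib Require Import Reals Lra Psatz.
From Coquelicot Require Import Coquelicot.
Open Scope R_scope.

(* Write ρ̌ = ρ̌_{u^-}, ρ̂ = ρ̂_{u^-}.  Since f agrees with the line φ_{u^-} of slope u^- at ρ̌ and ρ̂,
   β-strong concavity makes every secant slope (f x - f ρ̌)/(x - ρ̌), x ∈ ]ρ̌, ρ̂], at least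
   u^- + β/2 (ρ̂ - x).  On the other hand f lies below the line φ_{u^+} beyond ρ̂_{u^+}: it does so at R
   because f_α lies below its tangents, and it cannot cross back by maximality of ρ̂_{u^+}.  As
   ρ̂_{u^+} ≤ ρ̌, concavity then bounds the same secant slopes by u^+; let x tend to ρ̌. *)

Definition clamp (a b x : R) : R := Rmax a (Rmin b x).

Lemma clamp_in a b x : a <= b -> a <= clamp a b x <= b.
Proof. intros; unfold clamp, Rmax, Rmin; repeat destruct Rle_dec; lra. Qed.

Lemma clamp_id a b x : a <= x <= b -> clamp a b x = x.
Proof. intros; unfold clamp, Rmax, Rmin; repeat destruct Rle_dec; lra. Qed.

Lemma clamp_lipschitz a b x y : a <= b -> Rabs (clamp a b y - clamp a b x) <= Rabs (y - x).
Proof.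
  intros; unfold clamp, Rmax, Rmin; repeat destruct Rle_dec; unfold Rabs;
    repeat destruct Rcase_abs; lra.
Qed.

Lemma deriv_within_cont_within a b g x l :
  deriv_within a b g x l -> cont_within a b g x.
Proof.
  intros Hd eps Heps.
  destruct (Hd 1 Rlt_0_1) as [d [Hd0 Hq]].
  assert (Hl : 0 < Rabs l + 1) by (pose proof (Rabs_pos l); lra).
  exists (Rmin d (eps / (Rabs l + 1))); split.
  { apply Rmin_glb_lt; [lra | apply Rdiv_lt_0_compat; lra]. }
  intros y Hy Hyx.
  pose proof (Rmin_l d (eps / (Rabs l + 1))).
  pose proof (Rmin_r d (eps / (Rabs l + 1))).
  destruct (Req_dec y x) as [-> | Hne].
  { unfold Rminus; rewrite Rplus_opp_r, Rabs_R0; lra. }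
  specialize (Hq (y - x) ltac:(lra) ltac:(lra) ltac:(replace (x + (y - x)) with y by ring; lra)).
  replace (x + (y - x)) with y in Hq by ring.
  set (q := (g y - g x) / (y - x)) in Hq.
  replace (g y - g x) with (q * (y - x)) by (unfold q; field; lra).
  rewrite Rabs_mult.
  assert (Rabs q < Rabs l + 1) by (pose proof (Rabs_triang_inv q l); lra).
  assert (Rabs (y - x) * (Rabs l + 1) < eps).
  { replace eps with (eps / (Rabs l + 1) * (Rabs l + 1)) by (field; lra).
    apply Rmult_lt_compat_r; lra. }
  pose proof (Rabs_pos q); pose proof (Rabs_pos (y - x)); nra.
Qed.

Lemma cont_within_sub_affine a b g L q x :
  cont_within a b g x -> (forall y z, L y - L z = q * (y - z)) ->
  cont_within a b (fun y => g y - L y) x.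
Proof.
  intros Hg HL eps Heps.
  assert (Hq : 0 < Rabs q + 1) by (pose proof (Rabs_pos q); lra).
  destruct (Hg (eps / 2) ltac:(lra)) as [d [Hd Hgd]].
  exists (Rmin d (eps / 2 / (Rabs q + 1))); split.
  { apply Rmin_glb_lt; [lra | apply Rdiv_lt_0_compat; lra]. }
  intros y Hy Hyx.
  pose proof (Rmin_l d (eps / 2 / (Rabs q + 1))).
  pose proof (Rmin_r d (eps / 2 / (Rabs q + 1))).
  specialize (Hgd y Hy ltac:(lra)).
  replace (g y - L y - (g x - L x)) with ((g y - g x) + - (q * (y - x)))
    by (rewrite <- HL; ring).
  assert (Rabs (q * (y - x)) < eps / 2).
  { rewrite Rabs_mult.
    assert (Rabs (y - x) * (Rabs q + 1) < eps / 2).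
    { replace (eps / 2) with (eps / 2 / (Rabs q + 1) * (Rabs q + 1)) by (field; lra).
      apply Rmult_lt_compat_r; lra. }
    pose proof (Rabs_pos q); pose proof (Rabs_pos (y - x)); nra. }
  pose proof (Rabs_triang (g y - g x) (- (q * (y - x)))).
  rewrite Rabs_Ropp in *; lra.
Qed.

Lemma continuity_clamp a b g : a <= b ->
  (forall x, a <= x <= b -> cont_within a b g x) ->
  continuity (fun x => g (clamp a b x)).
Proof.
  intros Hab Hg x.
  unfold continuity_pt, continue_in, limit1_in, limit_in; simpl; unfold R_dist.
  intros eps Heps.
  destruct (Hg (clamp a b x) (clamp_in a b x Hab) eps Heps) as [d [Hd Hc]].
  exists d; split; [exact Hd |].
  intros y [_ Hy].
  apply Hc; [apply clamp_in; exact Hab |].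
  pose proof (clamp_lipschitz a b x y Hab); lra.
Qed.

Lemma deriv_within_add_sq a b g l x c :
  deriv_within a b g x l ->
  deriv_within a b (fun y => g y + c / 2 * y * y) x (l + c * x).
Proof.
  intros Hd eps Heps.
  assert (Hc : 0 < Rabs c + 1) by (pose proof (Rabs_pos c); lra).
  destruct (Hd (eps / 2) ltac:(lra)) as [d [Hd0 Hq]].
  exists (Rmin d (eps / (Rabs c + 1))); split.
  { apply Rmin_glb_lt; [lra | apply Rdiv_lt_0_compat; lra]. }
  intros h Hh Hha Hin.
  pose proof (Rmin_l d (eps / (Rabs c + 1))).
  pose proof (Rmin_r d (eps / (Rabs c + 1))).
  specialize (Hq h Hh ltac:(lra) Hin).
  replace ((g (x + h) + c / 2 * (x + h) * (x + h) - (g x + c / 2 * x * x)) / h - (l + c * x))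
    with (((g (x + h) - g x) / h - l) + c * h / 2) by (field; exact Hh).
  eapply Rle_lt_trans; [apply Rabs_triang |].
  assert (Rabs (c * h / 2) < eps / 2).
  { unfold Rdiv; rewrite !Rabs_mult, (Rabs_right (/ 2)) by lra.
    assert (Rabs h * (Rabs c + 1) < eps).
    { replace eps with (eps / (Rabs c + 1) * (Rabs c + 1)) by (field; lra).
      apply Rmult_lt_compat_r; lra. }
    pose proof (Rabs_pos c); pose proof (Rabs_pos h); nra. }
  lra.
Qed.

Lemma mvt_within a b g g' x y :
  a <= x -> x < y -> y <= b ->
  (forall z, a <= z <= b -> deriv_within a b g z (g' z)) ->
  exists c, x <= c <= y /\ g y - g x = g' c * (y - x).
Proof.
  intros Hax Hxy Hyb Hd.
  assert (Hcont : continuity (fun t => g (clamp a b t))).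
  { apply continuity_clamp; [lra |].
    intros z Hz; exact (deriv_within_cont_within _ _ _ _ _ (Hd z Hz)). }
  destruct (MVT_gen (fun t => g (clamp a b t)) x y g') as [c [Hc Eq]].
  - intros z Hz.
    rewrite Rmin_left in Hz by lra; rewrite Rmax_right in Hz by lra.
    apply is_derive_Reals; intros eps Heps.
    destruct (Hd z ltac:(lra) eps Heps) as [d [Hd0 Hq]].
    assert (Hm : 0 < Rmin d (Rmin (z - a) (b - z))) by (repeat apply Rmin_glb_lt; lra).
    exists (mkposreal _ Hm); simpl; intros h Hh Hha.
    pose proof (Rmin_l d (Rmin (z - a) (b - z))).
    pose proof (Rmin_r d (Rmin (z - a) (b - z))).
    pose proof (Rmin_l (z - a) (b - z)); pose proof (Rmin_r (z - a) (b - z)).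
    pose proof (Rabs_def2 _ _ Hha).
    rewrite (clamp_id a b (z + h)), (clamp_id a b z) by lra.
    apply Hq; [exact Hh | lra | lra].
  - intros; apply Hcont.
  - rewrite Rmin_left in Hc by lra; rewrite Rmax_right in Hc by lra.
    rewrite (clamp_id a b x), (clamp_id a b y) in Eq by lra.
    exists c; split; assumption.
Qed.

Lemma increment_le_of_deriv_le a b g g' m x y :
  (forall z, a <= z <= b -> deriv_within a b g z (g' z)) ->
  (forall z, a <= z <= b -> g' z <= m) ->
  a <= x -> x <= y -> y <= b -> g y - g x <= m * (y - x).
Proof.
  intros Hd Hm Hax Hxy Hyb.
  destruct (Req_dec x y) as [<- | Hne]; [lra |].
  destruct (mvt_within a b g g' x y) as [c [Hc ->]]; [lra | lra | lra | exact Hd |].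
  pose proof (Hm c ltac:(lra)); nra.
Qed.

Definition strongly_concave_on (a b c : R) (g : R -> R) : Prop :=
  forall x z y, a <= x -> x <= z -> z <= y -> y <= b ->
    (y - z) * g x + (z - x) * g y + c / 2 * (z - x) * (y - z) * (y - x) <= (y - x) * g z.

Lemma strongly_concave_on_le a b c c' g :
  c' <= c -> strongly_concave_on a b c g -> strongly_concave_on a b c' g.
Proof.
  intros Hc Hg x z y Hax Hxz Hzy Hyb.
  specialize (Hg x z y Hax Hxz Hzy Hyb).
  assert (0 <= (c - c') / 2 * ((z - x) * (y - z) * (y - x))).
  { apply Rmult_le_pos; [lra |]. repeat apply Rmult_le_pos; lra. }
  lra.
Qed.

Lemma concave_of_deriv_nonincr a b h h' :
  (forall z, a <= z <= b -> deriv_within a b h z (h' z)) ->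
  (forall s t, a <= s -> s <= t -> t <= b -> h' t <= h' s) ->
  strongly_concave_on a b 0 h.
Proof.
  intros Hd Hmon x z y Hax Hxz Hzy Hyb.
  destruct (Req_dec x z) as [<- | Hxz']; [lra |].
  destruct (Req_dec z y) as [<- | Hzy']; [lra |].
  destruct (mvt_within a b h h' x z) as [c1 [Hc1 E1]]; [lra | lra | lra | exact Hd |].
  destruct (mvt_within a b h h' z y) as [c2 [Hc2 E2]]; [lra | lra | lra | exact Hd |].
  assert (0 <= (y - z) * (z - x) * (h' c1 - h' c2)).
  { apply Rmult_le_pos; [nra |]. pose proof (Hmon c1 c2 ltac:(lra) ltac:(lra) ltac:(lra)); lra. }
  assert (Eq : (y - x) * h z - ((y - z) * h x + (z - x) * h y)
               = (y - z) * (h z - h x) - (z - x) * (h y - h z)) by ring.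
  rewrite E1, E2 in Eq.
  lra.
Qed.

Lemma strongly_concave_of_deriv2 a b c g g1 g2 :
  (forall x, a <= x <= b -> deriv_within a b g x (g1 x) /\ deriv_within a b g1 x (g2 x)) ->
  (forall x, a <= x <= b -> g2 x <= - c) ->
  strongly_concave_on a b c g.
Proof.
  intros Hd Hg2 x z y Hax Hxz Hzy Hyb.
  assert (Hh : strongly_concave_on a b 0 (fun t => g t + c / 2 * t * t)).
  { apply (concave_of_deriv_nonincr a b _ (fun t => g1 t + c * t)).
    - intros t Ht. apply deriv_within_add_sq, Hd, Ht.
    - intros s t Has Hst Htb.
      assert (g1 t - g1 s <= - c * (t - s)).
      { apply (increment_le_of_deriv_le a b g1 g2); try assumption.
        intros w Hw; apply Hd, Hw. }
      lra. }
  specialize (Hh x z y Hax Hxz Hzy Hyb); cbv beta in Hh.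
  lra.
Qed.

Lemma strongly_concave_f_alpha a b c f alpha :
  0 < alpha -> strongly_concave_on a b c f ->
  strongly_concave_on (alpha * a) (alpha * b) (c / alpha) (f_alpha alpha f).
Proof.
  intros Ha Hf x z y Hax Hxz Hzy Hyb; unfold f_alpha.
  assert (Hsc : forall s t, s <= t -> s / alpha <= t / alpha)
    by (intros; apply Rmult_le_compat_r; [apply Rlt_le, Rinv_0_lt_compat |]; lra).
  assert (Hlo : a <= x / alpha)
    by (replace a with (alpha * a / alpha) by (field; lra); apply Hsc; lra).
  assert (Hhi : y / alpha <= b)
    by (replace b with (alpha * b / alpha) by (field; lra); apply Hsc; lra).
  specialize (Hf (x / alpha) (z / alpha) (y / alpha) Hlo (Hsc _ _ Hxz) (Hsc _ _ Hzy) Hhi).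
  set (p := x / alpha) in *; set (r := z / alpha) in *; set (s := y / alpha) in *.
  replace x with (alpha * p) by (unfold p; field; lra).
  replace z with (alpha * r) by (unfold r; field; lra).
  replace y with (alpha * s) by (unfold s; field; lra).
  assert (0 < alpha * alpha) by nra.
  replace ((alpha * s - alpha * r) * (alpha * f p) + (alpha * r - alpha * p) * (alpha * f s)
           + c / alpha / 2 * (alpha * r - alpha * p) * (alpha * s - alpha * r) * (alpha * s - alpha * p))
    with (alpha * alpha * ((s - r) * f p + (r - p) * f s + c / 2 * (r - p) * (s - r) * (s - p)))
    by (field; lra).
  replace ((alpha * s - alpha * p) * (alpha * f r)) with (alpha * alpha * ((s - p) * f r)) by ring.
  apply Rmult_le_compat_l; lra.
Qed.

Lemma concave_le_tangent a b g T l y :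
  strongly_concave_on a b 0 g -> a <= T -> T <= y -> y <= b ->
  deriv_within a b g T l -> g y <= g T + l * (y - T).
Proof.
  intros Hc HaT HTy Hyb Hd.
  destruct (Req_dec T y) as [<- | Hne]; [lra |].
  apply Rnot_lt_le; intro Habove.
  set (s := (g y - g T) / (y - T)).
  assert (Hs : g y - g T = s * (y - T)) by (unfold s; field; lra).
  assert (Hls : l < s) by (apply (Rmult_lt_reg_r (y - T)); lra).
  destruct (Hd (s - l) ltac:(lra)) as [d [Hd0 Hdq]].
  set (h := Rmin (d / 2) (y - T)).
  assert (h <= d / 2) by apply Rmin_l.
  assert (h <= y - T) by apply Rmin_r.
  assert (0 < h) by (apply Rmin_glb_lt; lra).
  specialize (Hdq h ltac:(lra) ltac:(rewrite Rabs_right; lra) ltac:(lra)).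
  set (q := (g (T + h) - g T) / h) in Hdq.
  assert (Hqs : q < s) by (pose proof (Rabs_def2 _ _ Hdq); lra).
  assert (Hq : g (T + h) - g T = q * h) by (unfold q; field; lra).
  (* concavity: the chord slope q over [T, T + h] is at least the chord slope s over [T, y] *)
  specialize (Hc T (T + h) y HaT ltac:(lra) ltac:(lra) Hyb).
  assert (Hchord : h * (g y - g T) <= (y - T) * (g (T + h) - g T)) by lra.
  rewrite Hs, Hq in Hchord.
  assert (0 < (y - T) * h * (s - q)) by (repeat apply Rmult_lt_0_compat; lra).
  lra.
Qed.

Lemma nonpos_after_last_zero a b k p x :
  a <= b -> (forall t, a <= t <= b -> cont_within a b k t) ->
  k b <= 0 -> (forall t, a <= t <= b -> k t = 0 -> t <= p) ->
  a <= x -> p < x -> x <= b -> k x <= 0.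
Proof.
  intros Hab Hk Hb Hlast Hax Hpx Hxb.
  apply Rnot_lt_le; intro Hpos.
  destruct (IVT_cor (fun t => k (clamp a b t)) x b (continuity_clamp a b k Hab Hk) Hxb)
    as [z [Hz Hz0]].
  { rewrite !clamp_id by lra; nra. }
  rewrite clamp_id in Hz0 by lra.
  pose proof (Hlast z ltac:(lra) Hz0); lra.
Qed.

Lemma le_at_left_end_of_le_on_Ioc a b k d :
  a < b -> (forall x, a < x <= b -> k * (b - x) <= d) -> k * (b - a) <= d.
Proof.
  intros Hab H.
  destruct (Rle_or_lt k 0) as [Hk | Hk].
  { pose proof (H b ltac:(lra)); nra. }
  apply Rnot_lt_le; intro Hlt.
  set (e := Rmin (b - a) ((k * (b - a) - d) / (2 * k))).
  assert (e <= b - a) by apply Rmin_l.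
  assert (He : e <= (k * (b - a) - d) / (2 * k)) by apply Rmin_r.
  assert (0 < e) by (apply Rmin_glb_lt; [lra | apply Rdiv_lt_0_compat; lra]).
  assert (k * e <= (k * (b - a) - d) / 2).
  { replace ((k * (b - a) - d) / 2) with (k * ((k * (b - a) - d) / (2 * k))) by (field; lra).
    apply Rmult_le_compat_l; lra. }
  pose proof (H (a + e) ltac:(lra)); nra.
Qed.

Lemma strongly_concave_slope_gap a b c g p l r m M :
  strongly_concave_on a b c g -> 0 <= c ->
  a <= p -> p <= l -> l < r -> r <= b ->
  g r - g l = m * (r - l) ->
  (forall x, l < x <= r -> g x - g p <= M * (x - p)) ->
  c / 2 * (r - l) <= M - m.
Proof.
  intros Hg Hc Hap Hpl Hlr Hrb Hm HM.
  apply le_at_left_end_of_le_on_Ioc; [exact Hlr |].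
  intros x Hx.
  assert (Hlow : m * (x - l) + c / 2 * (x - l) * (r - x) <= g x - g l).
  { pose proof (Hg l x r ltac:(lra) ltac:(lra) ltac:(lra) Hrb) as H.
    replace (g r) with (g l + m * (r - l)) in H by lra.
    apply (Rmult_le_reg_l (r - l)); lra. }
  assert (Hup : g x - g l <= M * (x - l)).
  { pose proof (strongly_concave_on_le a b c 0 g Hc Hg p l x Hap Hpl ltac:(lra) ltac:(lra)) as H.
    assert ((x - l) * (g x - g p) <= (x - l) * (M * (x - p)))
      by (apply Rmult_le_compat_l; [lra | apply HM, Hx]).
    apply (Rmult_le_reg_l (x - p)); lra. }
  apply (Rmult_le_reg_l (x - l)); lra.
Qed.

Lemma phi_u_sub alpha f u rt y z :
  phi_u alpha f u rt y - phi_u alpha f u rt z = u * (y - z).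
Proof. unfold phi_u; ring. Qed.

Lemma hypF_strongly_concave Rr f f1 f2 v v1 v2 B beta :
  hypF Rr f f1 f2 v v1 v2 B beta -> strongly_concave_on 0 Rr beta f.
Proof.
  intros (_ & Cf & _ & _ & _ & _ & _ & _ & Hf2 & _).
  apply (strongly_concave_of_deriv2 0 Rr beta f f1 f2).
  - intros x Hx; destruct (Cf x Hx) as [H1 [H2 _]]; split; assumption.
  - intros x Hx; apply (Hf2 x Hx).
Qed.

Lemma f_le_phi_u_right_end Rr f f1 f2 v v1 v2 B beta alpha u rt :
  hypF Rr f f1 f2 v v1 v2 B beta -> 0 < alpha < 1 -> 0 <= u ->
  is_tilde_rho Rr alpha f u rt -> f Rr <= phi_u alpha f u rt Rr.
Proof.
  intros HF Ha Hu [Hrt Hd].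
  pose proof HF as (HR & _ & _ & _ & _ & fR & Hbeta & _).
  pose proof (strongly_concave_f_alpha 0 Rr beta f alpha ltac:(lra)
                (hypF_strongly_concave _ _ _ _ _ _ _ _ _ HF)) as Hconc.
  rewrite Rmult_0_r in Hconc.
  apply (strongly_concave_on_le _ _ _ 0) in Hconc; [| apply Rdiv_le_0_compat; lra].
  pose proof (concave_le_tangent 0 (alpha * Rr) _ rt u (alpha * Rr) Hconc
                ltac:(lra) ltac:(lra) ltac:(lra) Hd) as Htan.
  unfold f_alpha at 1 in Htan.
  replace (alpha * Rr / alpha) with Rr in Htan by (field; lra).
  unfold phi_u; rewrite fR in *.
  assert (0 <= u * (Rr - alpha * Rr)) by (apply Rmult_le_pos; nra).
  lra.
Qed.

Lemma f_le_phi_u_after_hat Rr f f1 f2 v v1 v2 B beta alpha u rt hat x :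
  hypF Rr f f1 f2 v v1 v2 B beta -> 0 < alpha < 1 -> 0 <= u ->
  is_tilde_rho Rr alpha f u rt -> is_hat_rho Rr alpha f u rt hat ->
  hat < x -> x <= Rr -> f x <= phi_u alpha f u rt x.
Proof.
  intros HF Ha Hu Ht [[Hhat _] Hmax] Hx HxR.
  pose proof HF as (HR & Cf & _).
  enough (f x - phi_u alpha f u rt x <= 0) by lra.
  apply (nonpos_after_last_zero 0 Rr (fun t => f t - phi_u alpha f u rt t) hat x); try lra.
  - intros t Ht'. apply (cont_within_sub_affine _ _ _ _ u).
    + exact (deriv_within_cont_within _ _ _ _ _ (proj1 (Cf t Ht'))).
    + intros; apply phi_u_sub.
  - pose proof (f_le_phi_u_right_end _ _ _ _ _ _ _ _ _ _ _ _ HF Ha Hu Ht); lra.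
  - intros t Ht' Ht0; apply Hmax; split; lra.
Qed.

Theorem mainTheorem3 :
  forall (Rr : R) (f f1 f2 v v1 v2 : R -> R) (B beta alpha um up : R)
         (rtm rtp chk_m hat_m hat_p : R),
  hypF Rr f f1 f2 v v1 v2 B beta ->
  0 < alpha < 1 ->
  0 <= um -> um < up -> up <= v 0 ->
  is_tilde_rho Rr alpha f um rtm ->
  is_tilde_rho Rr alpha f up rtp ->
  is_check_rho Rr alpha f um rtm chk_m ->
  is_hat_rho Rr alpha f um rtm hat_m ->
  is_hat_rho Rr alpha f up rtp hat_p ->
  hat_p <= chk_m ->
  up - um >= beta / 2 * (hat_m - chk_m).
Proof.
  intros Rr f f1 f2 v v1 v2 B beta alpha um up rtm rtp chk_m hat_m hat_p
    HF Halpha Hum Hup _ _ Htp [[_ Hchk_eq] Hchk_min] [[Hhat_m_in Hhat_m_eq] _]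
    Hhat_p Hpc.
  pose proof HF as (_ & _ & _ & _ & _ & _ & Hbeta & _).
  pose proof Hhat_p as [[Hhat_p_in Hhat_p_eq] _].
  assert (Hle : chk_m <= hat_m) by (apply Hchk_min; split; assumption).
  destruct (Rle_lt_or_eq_dec _ _ Hle) as [Hlt | <-]; [| lra].
  apply Rle_ge, (strongly_concave_slope_gap 0 Rr beta f hat_p chk_m hat_m um up); try lra.
  - exact (hypF_strongly_concave _ _ _ _ _ _ _ _ _ HF).
  - rewrite Hchk_eq, Hhat_m_eq; apply phi_u_sub.
  - intros x Hx.
    assert (Hbelow : f x <= phi_u alpha f up rtp x)
      by (apply (f_le_phi_u_after_hat Rr f f1 f2 v v1 v2 B beta alpha up rtp hat_p x); auto; lra).
    rewrite Hhat_p_eq; pose proof (phi_u_sub alpha f up rtp x hat_p); lra.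
Qed.
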